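(* Let $a,b,c>0$ and let $d,e$ be real numbers, not in $\{0,-1,-2,\dots\}$, such that $de\ge 3abc$ and $$d+e\ \ge\ \max\Big\{a+b+c,\ \alpha(a,b,c),\ 3(ab+bc+ac)-7abc\Big\},\qquad \alpha(a,b,c)=\tfrac13\big(2(ab+bc+ac)+3(a+b+c)-6abc-1\big).$$ Then $f(z)=z\,{}_3F_2(a,b,c;d,e;z^2)$ is close-to-convex in $\mathbb{D}$ with respect to $\frac12\log\big((1+z)/(1-z)\big)$.
   Context: $\mathbb{D}=\{z\in\mathbb{C}:|z|<1\}$. For $x\in\mathbb{C}$, $(x)_0=1$ and $(x)_n=x(x+1)\cdots(x+n-1)$ for $n\ge1$. The Clausen hypergeometric function is ${}_3F_2(a,b,c;d,e;z)=\sum_{n=0}^\infty \frac{(a)_n(b)_n(c)_n}{(d)_n(e)_n(1)_n}z^n$ for $|z|<1$ (with $d,e\notin\{0,-1,-2,\dots\}$). A normalized analytic function $f$ on $\mathbb{D}$ ($f(0)=0$, $f'(0)=1$) is close-to-convex with respect to a convex univalent function $g$ on $\mathbb{D}$ if $f$ is univalent on $\mathbb{D}$ and $\operatorname{Re}\big(f'(z)/g'(z)\big)>0$ for all $z\in\mathbb{D}$. Here $g(z)=\frac12\log\frac{1+z}{1-z}$, which is convex univalent on $\mathbb{D}$, with $g'(z)=1/(1-z^2)$. *)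

From Stdlib Require Import Reals Factorial.
From Coquelicot Require Import Coquelicot.
Open Scope R_scope.

Fixpoint poch (x : R) (n : nat) : R :=
  match n with
  | O => 1
  | S k => poch x k * (x + INR k)
  end.

(* Sum of a complex series, computed componentwise
   (equals the limit of partial sums whenever the series converges). *)
Definition CSeries (u : nat -> C) : C :=
  (Series (fun n => Re (u n)), Series (fun n => Im (u n))).

Definition F32 (a b c d e : R) (z : C) : C :=
  CSeries (fun n =>
    (RtoC (poch a n * poch b n * poch c n
           / (poch d n * poch e n * INR (fact n))) * Cpow z n)%C).

Definition unit_disk (z : C) : Prop := Cmod z < 1.

Definition analytic_on_disk (f : C -> C) : Prop :=
  forall z, unit_disk z -> ex_derive f z.

Definition univalent_on_disk (f : C -> C) : Prop :=
  analytic_on_disk f /\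
  (forall z w, unit_disk z -> unit_disk w -> f z = f w -> z = w).

Definition normalized (f : C -> C) : Prop :=
  analytic_on_disk f /\ f (RtoC 0) = RtoC 0 /\ is_derive f (RtoC 0) (RtoC 1).

Definition close_to_convex_wrt (f g : C -> C) : Prop :=
  normalized f /\ univalent_on_disk f /\ analytic_on_disk g /\
  (forall z (f' g' : C), unit_disk z ->
     is_derive f z f' -> is_derive g z g' -> 0 < Re (f' / g')%C).

(* g(z) = (1/2) log((1+z)/(1-z)) = sum_{n>=0} z^(2n+1)/(2n+1) on the disk *)
Definition half_log_ratio (z : C) : C :=
  CSeries (fun n => (Cpow z (2 * n + 1) / RtoC (INR (2 * n + 1)))%C).

Definition alpha_abc (a b c : R) : R :=
  (2 * (a * b + b * c + a * c) + 3 * (a + b + c) - 6 * a * b * c - 1) / 3.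

Definition not_nonpos_int (x : R) : Prop := forall k : nat, x <> - INR k.

From Stdlib Require Import Reals Lra Lia Factorial.
From Coquelicot Require Import Coquelicot.
Open Scope R_scope.

(* Write f z = sum A_n z^(2n+1) and g z = sum z^(2n+1)/(2n+1), so that
   f'/g' = (1 - z^2) sum B_n z^(2n) with B_n = (2n+1) A_n.  The conditions on
   a, ..., e make the cubic (2n+1)(d+n)(e+n)(n+1) - (2n+3)(a+n)(b+n)(c+n) have
   nonnegative coefficients, so B_n is nonincreasing from B_0 = 1; summation by
   parts then gives Re ((1 - w) sum B_n w^n) >= (1 - |w|) sum B_n |w|^n > 0.
   Univalence is the Noshiro-Warschawski argument: g maps the disk onto a convex
   strip, and along the preimage of the segment from g w to g z the real part of
   f / (g z - g w) is strictly increasing, so f z <> f w. *)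

Lemma INR_odd n : INR (2 * n + 1) = 2 * INR n + 1.
Proof. rewrite plus_INR, mult_INR; simpl; ring. Qed.

Lemma INR_odd_ge_1 n : 1 <= INR (2 * n + 1).
Proof. apply (le_INR 1); lia. Qed.

Lemma poch_pos x n : 0 < x -> 0 < poch x n.
Proof.
  intros Hx; induction n as [|n IH]; simpl; [lra|].
  apply Rmult_lt_0_compat; auto. pose proof (pos_INR n); lra.
Qed.

Definition F32_coef (a b c d e : R) (n : nat) : R :=
  poch a n * poch b n * poch c n / (poch d n * poch e n * INR (fact n)).

Lemma F32_coef_0 a b c d e : F32_coef a b c d e 0 = 1.
Proof. unfold F32_coef; simpl; field. Qed.

Lemma F32_coef_pos a b c d e n :
  0 < a -> 0 < b -> 0 < c -> 0 < d -> 0 < e -> 0 < F32_coef a b c d e n.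
Proof.
  intros Ha Hb Hc Hd He; unfold F32_coef.
  pose proof (INR_fact_lt_0 n).
  apply Rdiv_lt_0_compat; repeat apply Rmult_lt_0_compat; auto using poch_pos.
Qed.

Lemma F32_coef_S a b c d e n : 0 < d -> 0 < e ->
  F32_coef a b c d e (S n) = F32_coef a b c d e n *
    ((a + INR n) * (b + INR n) * (c + INR n)) /
    ((d + INR n) * (e + INR n) * (INR n + 1)).
Proof.
  intros Hd He; unfold F32_coef; simpl poch.
  change (fact (S n)) with (S n * fact n)%nat.
  rewrite mult_INR, S_INR.
  pose proof (poch_pos d n Hd); pose proof (poch_pos e n He).
  pose proof (INR_fact_lt_0 n); pose proof (pos_INR n).
  field; repeat split; lra.
Qed.

Lemma odd_ratio_cubic_le a b c d e x :
  d * e >= 3 * a * b * c ->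
  d + e >= a + b + c ->
  d + e >= alpha_abc a b c ->
  d + e >= 3 * (a * b + b * c + a * c) - 7 * a * b * c ->
  0 <= x ->
  (2 * x + 3) * ((a + x) * (b + x) * (c + x))
    <= (2 * x + 1) * ((d + x) * (e + x) * (x + 1)).
Proof.
  unfold alpha_abc; intros H1 H2 H3 H4 Hx.
  set (s1 := a + b + c); set (s2 := a * b + b * c + a * c);
  set (s3 := a * b * c); set (t1 := d + e); set (t2 := d * e).
  assert (Hcubic : (2 * x + 1) * ((d + x) * (e + x) * (x + 1))
      - (2 * x + 3) * ((a + x) * (b + x) * (c + x)) =
    2 * (t1 - s1) * (x * x * x) + (2 * t2 + 3 * t1 + 1 - 2 * s2 - 3 * s1) * (x * x)
    + (3 * t2 + t1 - 2 * s3 - 3 * s2) * x + (t2 - 3 * s3)).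
  { unfold s1, s2, s3, t1, t2; ring. }
  assert (0 <= 2 * (t1 - s1) * (x * x * x)).
  { apply Rmult_le_pos; [unfold t1, s1; lra | repeat apply Rmult_le_pos; lra]. }
  assert (0 <= (2 * t2 + 3 * t1 + 1 - 2 * s2 - 3 * s1) * (x * x)).
  { apply Rmult_le_pos; [unfold t1, t2, s1, s2; lra | nra]. }
  assert (0 <= (3 * t2 + t1 - 2 * s3 - 3 * s2) * x).
  { apply Rmult_le_pos; [unfold t1, t2, s2, s3; lra | lra]. }
  assert (0 <= t2 - 3 * s3) by (unfold t2, s3; lra).
  lra.
Qed.

Definition deriv_coef (a b c d e : R) (n : nat) : R :=
  INR (2 * n + 1) * F32_coef a b c d e n.

Section DerivCoef.
Variables a b c d e : R.
Hypotheses (Ha : 0 < a) (Hb : 0 < b) (Hc : 0 < c) (Hd : 0 < d) (He : 0 < e).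
Hypothesis H1 : d * e >= 3 * a * b * c.
Hypothesis H2 : d + e >= a + b + c.
Hypothesis H3 : d + e >= alpha_abc a b c.
Hypothesis H4 : d + e >= 3 * (a * b + b * c + a * c) - 7 * a * b * c.

Lemma deriv_coef_0 : deriv_coef a b c d e 0 = 1.
Proof. unfold deriv_coef; rewrite F32_coef_0; simpl; ring. Qed.

Lemma deriv_coef_pos n : 0 < deriv_coef a b c d e n.
Proof.
  apply Rmult_lt_0_compat; [apply lt_0_INR; lia | apply F32_coef_pos; auto].
Qed.

Lemma deriv_coef_S_le n : deriv_coef a b c d e (S n) <= deriv_coef a b c d e n.
Proof.
  unfold deriv_coef; rewrite F32_coef_S, !INR_odd, S_INR by auto.
  pose proof (F32_coef_pos a b c d e n Ha Hb Hc Hd He) as HA.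
  pose proof (pos_INR n) as Hn.
  set (A := F32_coef a b c d e n) in *; set (x := INR n) in *.
  assert (Hden : 0 < (d + x) * (e + x) * (x + 1))
    by (repeat apply Rmult_lt_0_compat; lra).
  pose proof (odd_ratio_cubic_le a b c d e x H1 H2 H3 H4 Hn) as Hcubic.
  replace ((2 * (x + 1) + 1) *
    (A * ((a + x) * (b + x) * (c + x)) / ((d + x) * (e + x) * (x + 1))))
    with (A * ((2 * x + 3) * ((a + x) * (b + x) * (c + x)))
          / ((d + x) * (e + x) * (x + 1))) by (field; lra).
  apply Rle_div_l; [exact Hden|].
  replace ((2 * x + 1) * A * ((d + x) * (e + x) * (x + 1)))
    with (A * ((2 * x + 1) * ((d + x) * (e + x) * (x + 1)))) by ring.
  apply Rmult_le_compat_l; lra.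
Qed.

Lemma deriv_coef_le_1 n : deriv_coef a b c d e n <= 1.
Proof.
  induction n as [|n IH]; [rewrite deriv_coef_0; lra|].
  pose proof (deriv_coef_S_le n); lra.
Qed.

Lemma F32_coef_abs_le_1 n : Rabs (F32_coef a b c d e n) <= 1.
Proof.
  pose proof (deriv_coef_le_1 n) as Hle; unfold deriv_coef in Hle.
  pose proof (F32_coef_pos a b c d e n Ha Hb Hc Hd He).
  pose proof (INR_odd_ge_1 n).
  rewrite Rabs_pos_eq by lra; nra.
Qed.

End DerivCoef.

Lemma Series_zero : Series (fun _ => 0) = 0.
Proof.
  rewrite (Series_ext _ (fun _ => 0 * 0)) by (intros; ring).
  rewrite Series_scal_l; ring.
Qed.

Lemma ex_series_Rabs_le (u b : nat -> R) :
  (forall n, Rabs (u n) <= b n) -> ex_series b -> ex_series u.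
Proof.
  intros Hub Hb; apply ex_series_Rabs.
  apply (ex_series_le (K := R_AbsRing) (V := R_CompleteNormedModule) _ b); auto.
  intros n; change (Rabs (Rabs (u n)) <= b n); rewrite Rabs_Rabsolu; auto.
Qed.

Lemma ex_series_Rplus (u v : nat -> R) :
  ex_series u -> ex_series v -> ex_series (fun n => u n + v n).
Proof. exact (ex_series_plus (K := R_AbsRing) u v). Qed.

Lemma ex_series_Rminus (u v : nat -> R) :
  ex_series u -> ex_series v -> ex_series (fun n => u n - v n).
Proof. exact (ex_series_minus (K := R_AbsRing) u v). Qed.

Lemma ex_series_Rscal_l (k : R) (u : nat -> R) :
  ex_series u -> ex_series (fun n => k * u n).
Proof. exact (ex_series_scal_l (K := R_AbsRing) k u). Qed.

Lemma ex_series_Rscal_r (k : R) (u : nat -> R) :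
  ex_series u -> ex_series (fun n => u n * k).
Proof.
  intros Hu; eapply ex_series_ext; [|exact (ex_series_Rscal_l k u Hu)].
  intros; simpl; ring.
Qed.

Lemma Series_le_ex (u v : nat -> R) : ex_series u -> ex_series v ->
  (forall n, u n <= v n) -> Series u <= Series v.
Proof.
  intros Hu Hv Huv.
  assert (Hdiff : 0 <= Series (fun n => v n - u n)).
  { rewrite <- Series_zero; apply Series_le; [|now apply ex_series_Rminus].
    intros n; specialize (Huv n); lra. }
  rewrite Series_minus in Hdiff by auto; lra.
Qed.

Lemma Im_le_Cmod z : Rabs (Im z) <= Cmod z.
Proof.
  destruct z as [x y]; unfold Cmod, Im; simpl.
  rewrite <- sqrt_Rsqr_abs; apply sqrt_le_1_alt; unfold Rsqr.
  pose proof (pow2_ge_0 x); nra.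
Qed.

Definition abs_summable (u : nat -> C) : Prop := ex_series (fun n => Cmod (u n)).

Lemma abs_summable_Re u : abs_summable u -> ex_series (fun n => Re (u n)).
Proof. exact (ex_series_Rabs_le _ _ (fun n => re_le_Cmod (u n))). Qed.

Lemma abs_summable_Im u : abs_summable u -> ex_series (fun n => Im (u n)).
Proof. exact (ex_series_Rabs_le _ _ (fun n => Im_le_Cmod (u n))). Qed.

Lemma abs_summable_le u b :
  (forall n, Cmod (u n) <= b n) -> ex_series b -> abs_summable u.
Proof.
  intros Hub Hb; apply (ex_series_Rabs_le _ b); auto.
  intros n; rewrite Rabs_pos_eq; auto using Cmod_ge_0.
Qed.

Lemma abs_summable_plus u v :
  abs_summable u -> abs_summable v -> abs_summable (fun n => u n + v n)%C.
Proof.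
  intros Hu Hv; apply (abs_summable_le _ (fun n => Cmod (u n) + Cmod (v n))).
  - intros; apply Cmod_triangle.
  - now apply ex_series_Rplus.
Qed.

Lemma abs_summable_scal k u : abs_summable u -> abs_summable (fun n => k * u n)%C.
Proof.
  intros Hu; apply (abs_summable_le _ (fun n => Cmod k * Cmod (u n))).
  - intros; rewrite Cmod_mult; lra.
  - now apply ex_series_Rscal_l.
Qed.

Lemma CSeries_ext u v : (forall n, u n = v n) -> CSeries u = CSeries v.
Proof.
  intros Huv; unfold CSeries.
  rewrite (Series_ext _ (fun n => Re (v n))), (Series_ext (fun n => Im (u n)) (fun n => Im (v n)));
    auto; intros; now rewrite Huv.
Qed.

Lemma CSeries_zero : CSeries (fun _ => RtoC 0) = RtoC 0.
Proof. unfold CSeries; simpl; now rewrite Series_zero. Qed.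

Lemma CSeries_plus u v : abs_summable u -> abs_summable v ->
  CSeries (fun n => u n + v n)%C = (CSeries u + CSeries v)%C.
Proof.
  intros Hu Hv; unfold CSeries, Cplus; simpl; f_equal.
  - rewrite <- Series_plus by auto using abs_summable_Re. apply Series_ext; reflexivity.
  - rewrite <- Series_plus by auto using abs_summable_Im. apply Series_ext; reflexivity.
Qed.

Lemma CSeries_scal k u : abs_summable u ->
  CSeries (fun n => k * u n)%C = (k * CSeries u)%C.
Proof.
  intros Hu; unfold CSeries, Cmult; simpl.
  pose proof (abs_summable_Re u Hu); pose proof (abs_summable_Im u Hu).
  f_equal.
  - rewrite <- !Series_scal_l, <- Series_minus by now apply ex_series_Rscal_l.
    apply Series_ext; reflexivity.
  - rewrite <- !Series_scal_l, <- Series_plus by now apply ex_series_Rscal_l.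
    apply Series_ext; reflexivity.
Qed.

Lemma CSeries_incr_1 u : abs_summable u ->
  CSeries u = (u 0%nat + CSeries (fun n => u (S n)))%C.
Proof.
  intros Hu; unfold CSeries, Cplus; simpl.
  rewrite (Series_incr_1 (fun n => Re (u n))), (Series_incr_1 (fun n => Im (u n)))
    by auto using abs_summable_Re, abs_summable_Im.
  now destruct (u 0%nat).
Qed.

(* Rotate the sum onto the positive real axis by a unimodular [w], then
   compare real parts termwise. *)
Lemma CSeries_Cmod_le u : abs_summable u ->
  Cmod (CSeries u) <= Series (fun n => Cmod (u n)).
Proof.
  intros Hu; set (X := CSeries u).
  destruct (Ceq_dec X 0) as [HX|HX].
  - rewrite HX, Cmod_0, <- Series_zero; apply Series_le; [|exact Hu].
    intros; split; [lra | apply Cmod_ge_0].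
  - assert (Hm : 0 < Cmod X) by now apply Cmod_gt_0.
    assert (HmC : RtoC (Cmod X) <> 0%C) by (intro H; apply RtoC_inj in H; lra).
    set (w := (Cconj X / RtoC (Cmod X))%C).
    assert (HwX : Re (w * X) = Cmod X).
    { unfold w; replace (Cconj X / RtoC (Cmod X) * X)%C
        with (X * Cconj X / RtoC (Cmod X))%C by (field; exact HmC).
      rewrite <- Cmod2_conj, <- RtoC_div by lra; simpl; field; lra. }
    assert (Hw : Cmod w = 1).
    { unfold w; rewrite Cmod_div, Cmod_conj, Cmod_R, Rabs_pos_eq by (auto; lra).
      field; lra. }
    rewrite <- HwX; unfold X; rewrite <- CSeries_scal by exact Hu.
    unfold CSeries at 1; simpl.
    apply Series_le_ex; [apply (abs_summable_Re (fun n => w * u n)%C), abs_summable_scal; exact Hu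
                        | exact Hu |].
    intros n; eapply Rle_trans; [apply Rle_abs|].
    eapply Rle_trans; [apply (re_le_Cmod (w * u n)%C)|].
    rewrite Cmod_mult, Hw; lra.
Qed.

Lemma is_derive_C_of_estimate (F : C -> C) x L :
  (forall eps, 0 < eps -> exists delta, 0 < delta /\ forall y, Cmod (y - x) < delta ->
     Cmod (F y - F x - (y - x) * L)%C <= eps * Cmod (y - x)) ->
  is_derive F x L.
Proof.
  intros Hest; split; [apply is_linear_scal_l|].
  intros x' Hx'.
  apply (is_filter_lim_locally_unique (K := C_AbsRing)
           (V := AbsRing_NormedModule C_AbsRing)) in Hx'; subst x'.
  intros eps; destruct (Hest eps (cond_pos eps)) as [delta [Hdelta Hy]].
  exists (mkposreal delta Hdelta); exact Hy.
Qed.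

Lemma Cpow_S_sub_linear (x h : C) m :
  ((x + h) ^ S (S m) - x ^ S (S m) - RtoC (INR (S (S m))) * x ^ S m * h)%C =
  ((x + h) * ((x + h) ^ S m - x ^ S m - RtoC (INR (S m)) * x ^ m * h)
    + RtoC (INR (S m)) * x ^ m * (h * h))%C.
Proof.
  rewrite (Cpow_S (x + h) (S m)), !(Cpow_S x (S m)), (Cpow_S x m), (S_INR (S m)), RtoC_plus.
  ring.
Qed.

Lemma Cpow_S_sub_linear_bound (x h : C) r m :
  0 < r -> Cmod x <= r -> Cmod (x + h) <= r ->
  Cmod ((x + h) ^ S m - x ^ S m - RtoC (INR (S m)) * x ^ m * h)%C
    <= INR (S m) ^ 2 * r ^ m * Cmod h ^ 2 / r.
Proof.
  intros Hr Hx Hxh.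
  pose proof (Cmod_ge_0 h) as Hh; pose proof (Cmod_ge_0 x) as Hx0.
  induction m as [|m IH].
  - replace ((x + h) ^ 1 - x ^ 1 - RtoC (INR 1) * x ^ 0 * h)%C with (RtoC 0)
      by (simpl; ring).
    rewrite Cmod_0; apply Rle_div_r; [exact Hr|].
    rewrite Rmult_0_l; apply Rmult_le_pos; [simpl; lra | apply pow2_ge_0].
  - rewrite Cpow_S_sub_linear.
    eapply Rle_trans; [apply Cmod_triangle|].
    rewrite !Cmod_mult, Cmod_R, Rabs_pos_eq, Cmod_pow by apply pos_INR.
    set (P := Cmod ((x + h) ^ S m - x ^ S m - RtoC (INR (S m)) * x ^ m * h)%C) in *.
    assert (0 <= P) by apply Cmod_ge_0.
    assert (Hxm : Cmod x ^ m <= r ^ m) by (apply pow_incr; lra).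
    assert (0 <= INR (S m)) by apply pos_INR.
    assert (Hfirst : Cmod (x + h) * P <= INR (S m) ^ 2 * r ^ m * Cmod h ^ 2).
    { replace (INR (S m) ^ 2 * r ^ m * Cmod h ^ 2)
        with (r * (INR (S m) ^ 2 * r ^ m * Cmod h ^ 2 / r)) by (field; lra).
      apply Rmult_le_compat; auto using Cmod_ge_0. }
    assert (Hsecond : INR (S m) * Cmod x ^ m * (Cmod h * Cmod h)
                      <= INR (S m) * r ^ m * Cmod h ^ 2).
    { replace (Cmod h ^ 2) with (Cmod h * Cmod h) by ring.
      apply Rmult_le_compat_r; [nra|]. apply Rmult_le_compat_l; auto. }
    replace (INR (S (S m)) ^ 2 * r ^ S m * Cmod h ^ 2 / r)
      with (INR (S (S m)) ^ 2 * r ^ m * Cmod h ^ 2) by (simpl; field; lra).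
    rewrite (S_INR (S m)).
    assert (0 <= r ^ m * Cmod h ^ 2)
      by (apply Rmult_le_pos; [apply pow_le; lra | apply pow2_ge_0]).
    nra.
Qed.

Definition odd_majorant (r : R) (n : nat) : R := INR (2 * n + 1) ^ 2 * r ^ (2 * n).

Lemma odd_majorant_pos r n : 0 <= r -> 0 <= odd_majorant r n.
Proof. intros; apply Rmult_le_pos; [apply pow2_ge_0 | now apply pow_le]. Qed.

Lemma odd_majorant_ge r n : 0 <= r -> INR (2 * n + 1) * r ^ (2 * n) <= odd_majorant r n.
Proof.
  intros Hr; unfold odd_majorant.
  pose proof (INR_odd_ge_1 n); apply Rmult_le_compat_r; [now apply pow_le | nra].
Qed.

Lemma ex_series_odd_majorant r : 0 < r < 1 -> ex_series (odd_majorant r).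
Proof.
  intros Hr; apply ex_series_Rabs; apply (ex_series_DAlembert _ (r ^ 2)).
  - nra.
  - intros n; apply Rmult_integral_contrapositive; split; apply pow_nonzero.
    + pose proof (INR_odd_ge_1 n); lra.
    + lra.
  - assert (Hinv : is_lim_seq (fun n => / (INR n + / 2)) 0).
    { replace (Finite 0) with (Rbar_inv p_infty) by reflexivity.
      apply is_lim_seq_inv; [|discriminate].
      apply (is_lim_seq_plus _ _ p_infty (/ 2) p_infty);
        [apply is_lim_seq_INR | apply is_lim_seq_const | reflexivity]. }
    assert (Hlim : is_lim_seq
      (fun n => (1 + / (INR n + / 2)) * (1 + / (INR n + / 2)) * (r * r))
      ((1 + 0) * (1 + 0) * (r * r))).
    { apply is_lim_seq_mult'; [apply is_lim_seq_mult'|];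
        try apply is_lim_seq_plus'; auto using is_lim_seq_const. }
    replace (r ^ 2) with ((1 + 0) * (1 + 0) * (r * r)) by ring.
    eapply is_lim_seq_ext; [|exact Hlim]; intros n.
    unfold odd_majorant; rewrite !INR_odd, S_INR.
    replace (2 * S n)%nat with (2 * n + 2)%nat by lia; rewrite pow_add.
    pose proof (pos_INR n); assert (0 < r ^ (2 * n)) by (apply pow_lt; lra).
    rewrite Rabs_pos_eq; [field; repeat split; lra|].
    apply Rle_div_r; [apply Rmult_lt_0_compat; [apply pow_lt|]; nra|].
    rewrite Rmult_0_l; apply Rmult_le_pos; [apply pow2_ge_0|].
    apply Rmult_le_pos; [lra | apply pow2_ge_0].
Qed.

Definition odd_series (a : nat -> R) (z : C) : C :=
  CSeries (fun n => RtoC (a n) * z ^ (2 * n + 1))%C.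

Definition odd_series_deriv (a : nat -> R) (z : C) : C :=
  CSeries (fun n => RtoC (a n * INR (2 * n + 1)) * z ^ (2 * n))%C.

Section OddSeries.
Variable a : nat -> R.
Hypothesis Ha : forall n, Rabs (a n) <= 1.

Lemma abs_summable_odd_series z r : Cmod z <= r -> 0 < r < 1 ->
  abs_summable (fun n => RtoC (a n) * z ^ (2 * n + 1))%C.
Proof.
  intros Hz Hr; apply (abs_summable_le _ (odd_majorant r)); [|now apply ex_series_odd_majorant].
  intros n; rewrite Cmod_mult, Cmod_R, Cmod_pow.
  eapply Rle_trans; [|apply odd_majorant_ge; lra].
  pose proof (Ha n); pose proof (Rabs_pos (a n)); pose proof (INR_odd_ge_1 n).
  pose proof (Cmod_ge_0 z).
  assert (Cmod z ^ (2 * n + 1) <= r ^ (2 * n)).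
  { rewrite pow_add, pow_1.
    assert (Cmod z ^ (2 * n) <= r ^ (2 * n)) by (apply pow_incr; lra).
    pose proof (pow_le (Cmod z) (2 * n) (Cmod_ge_0 z)); nra. }
  pose proof (pow_le (Cmod z) (2 * n + 1) (Cmod_ge_0 z)); nra.
Qed.

Lemma abs_summable_odd_series_deriv z r : Cmod z <= r -> 0 < r < 1 ->
  abs_summable (fun n => RtoC (a n * INR (2 * n + 1)) * z ^ (2 * n))%C.
Proof.
  intros Hz Hr; apply (abs_summable_le _ (odd_majorant r)); [|now apply ex_series_odd_majorant].
  intros n; rewrite Cmod_mult, Cmod_R, Cmod_pow, Rabs_mult, (Rabs_pos_eq (INR _)) by apply pos_INR.
  eapply Rle_trans; [|apply odd_majorant_ge; lra].
  pose proof (Ha n); pose proof (Rabs_pos (a n)); pose proof (INR_odd_ge_1 n).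
  assert (Cmod z ^ (2 * n) <= r ^ (2 * n)) by (apply pow_incr; split; [apply Cmod_ge_0 | exact Hz]).
  pose proof (pow_le (Cmod z) (2 * n) (Cmod_ge_0 z)).
  apply Rmult_le_compat; nra.
Qed.

Lemma odd_series_remainder_bound x h r : 0 < r < 1 -> Cmod x <= r -> Cmod (x + h) <= r ->
  Cmod (odd_series a (x + h) - odd_series a x - h * odd_series_deriv a x)%C
    <= Series (odd_majorant r) * (Cmod h ^ 2 / r).
Proof.
  intros Hr Hx Hxh.
  set (P := fun n => (RtoC (a n) *
    ((x + h) ^ S (2 * n) - x ^ S (2 * n) - RtoC (INR (S (2 * n))) * x ^ (2 * n) * h))%C).
  assert (HP : forall n, Cmod (P n) <= odd_majorant r n * (Cmod h ^ 2 / r)).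
  { intros n; unfold P; rewrite Cmod_mult, Cmod_R.
    pose proof (Cpow_S_sub_linear_bound x h r (2 * n) (proj1 Hr) Hx Hxh) as Hb.
    pose proof (Cmod_ge_0 ((x + h) ^ S (2 * n) - x ^ S (2 * n)
                           - RtoC (INR (S (2 * n))) * x ^ (2 * n) * h)%C).
    eapply Rle_trans; [apply Rmult_le_compat_r; [eassumption | apply Ha]|].
    rewrite Rmult_1_l; eapply Rle_trans; [exact Hb|].
    unfold odd_majorant; replace (2 * n + 1)%nat with (S (2 * n)) by lia.
    right; field; lra. }
  assert (Hmaj : ex_series (fun n => odd_majorant r n * (Cmod h ^ 2 / r)))
    by now apply ex_series_Rscal_r, ex_series_odd_majorant.
  assert (HPsum : abs_summable P) by exact (abs_summable_le _ _ HP Hmaj).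
  assert (Hsplit : (odd_series a (x + h) - odd_series a x - h * odd_series_deriv a x)%C
                   = CSeries P).
  { unfold odd_series, odd_series_deriv.
    pose proof (abs_summable_odd_series (x + h) r Hxh Hr).
    pose proof (abs_summable_scal (-1) _ (abs_summable_odd_series x r Hx Hr)).
    pose proof (abs_summable_scal (- h) _ (abs_summable_odd_series_deriv x r Hx Hr)).
    match goal with |- (?S1 - ?S2 - h * ?S3)%C = _ =>
      replace (S1 - S2 - h * S3)%C with (S1 + (-1) * S2 + (- h) * S3)%C by ring end.
    rewrite <- !CSeries_scal by eauto using abs_summable_odd_series, abs_summable_odd_series_deriv.
    rewrite <- !CSeries_plus by auto using abs_summable_plus.
    apply CSeries_ext; intros n; unfold P.
    replace (S (2 * n)) with (2 * n + 1)%nat by lia.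
    rewrite RtoC_mult; ring. }
  rewrite Hsplit; eapply Rle_trans; [now apply CSeries_Cmod_le|].
  rewrite <- Series_scal_r; apply Series_le_ex; auto.
Qed.

Lemma is_derive_odd_series x : Cmod x < 1 -> is_derive (odd_series a) x (odd_series_deriv a x).
Proof.
  intros Hx; apply is_derive_C_of_estimate; intros eps Heps.
  pose proof (Cmod_ge_0 x).
  set (r := (1 + Cmod x) / 2).
  assert (Hr : 0 < r < 1) by (unfold r; lra).
  set (M := Series (odd_majorant r)).
  assert (HM : 0 <= M).
  { unfold M; rewrite <- Series_zero; apply Series_le; [|now apply ex_series_odd_majorant].
    intros; split; [lra | apply odd_majorant_pos; lra]. }
  exists (Rmin (r - Cmod x) (eps * r / (M + 1))); split.
  { apply Rmin_pos; [unfold r; lra | apply Rdiv_lt_0_compat; nra]. }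
  intros y Hy; set (h := (y - x)%C) in *.
  assert (Hh1 : Cmod h < r - Cmod x) by exact (Rlt_le_trans _ _ _ Hy (Rmin_l _ _)).
  assert (Hh2 : Cmod h < eps * r / (M + 1)) by exact (Rlt_le_trans _ _ _ Hy (Rmin_r _ _)).
  assert (Hyxh : y = (x + h)%C) by (unfold h; ring).
  assert (Hxh : Cmod (x + h) <= r) by (pose proof (Cmod_triangle x h); lra).
  rewrite Hyxh; eapply Rle_trans.
  { apply odd_series_remainder_bound; [exact Hr | unfold r; lra | exact Hxh]. }
  fold M; pose proof (Cmod_ge_0 h).
  assert (M * Cmod h <= eps * r).
  { apply Rlt_le, Rle_div_r in Hh2; [nra | lra]. }
  replace (M * (Cmod h ^ 2 / r)) with (M * Cmod h * Cmod h / r) by (field; lra).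
  apply Rle_div_l; [lra | nra].
Qed.

End OddSeries.

Section PowerSeriesOneSub.
Variable B : nat -> R.
Hypothesis HB : forall n, Rabs (B n) <= 1.

Lemma abs_summable_power_series w : Cmod w < 1 ->
  abs_summable (fun n => RtoC (B n) * w ^ n)%C.
Proof.
  intros Hw; apply (abs_summable_le _ (fun n => Cmod w ^ n)).
  - intros n; rewrite Cmod_mult, Cmod_R, Cmod_pow.
    pose proof (HB n); pose proof (pow_le (Cmod w) n (Cmod_ge_0 w)); nra.
  - apply ex_series_geom; rewrite Rabs_pos_eq; auto using Cmod_ge_0.
Qed.

Lemma abs_summable_power_series_S w : Cmod w < 1 ->
  abs_summable (fun n => RtoC (B n) * w ^ S n)%C.
Proof.
  intros Hw; unfold abs_summable.
  eapply ex_series_ext; [|exact (abs_summable_scal w _ (abs_summable_power_series w Hw))].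
  intros n; simpl; f_equal; ring.
Qed.

Lemma power_series_mul_one_sub w : Cmod w < 1 ->
  (CSeries (fun n => RtoC (B n) * w ^ n) * (1 - w) =
   RtoC (B 0%nat) + CSeries (fun n => RtoC (B (S n) - B n) * w ^ S n))%C.
Proof.
  intros Hw.
  pose proof (abs_summable_power_series w Hw) as Hsum.
  assert (Hsum_S : abs_summable (fun n => RtoC (B (S n)) * w ^ S n)%C)
    by exact (proj1 (ex_series_incr_1 _) Hsum).
  pose proof (abs_summable_power_series_S w Hw) as Hsum_w.
  assert (Hmul_w : CSeries (fun n => RtoC (B n) * w ^ S n)%C
                   = (w * CSeries (fun n => RtoC (B n) * w ^ n))%C).
  { rewrite <- CSeries_scal by exact Hsum; apply CSeries_ext; intros n; simpl; ring. }
  assert (Hdiff : CSeries (fun n => RtoC (B (S n) - B n) * w ^ S n)%C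
     = (CSeries (fun n => RtoC (B (S n)) * w ^ S n)
        + (-1) * CSeries (fun n => RtoC (B n) * w ^ S n))%C).
  { rewrite <- CSeries_scal, <- CSeries_plus by auto using abs_summable_scal.
    apply CSeries_ext; intros n; rewrite RtoC_minus; ring. }
  rewrite Hdiff, Hmul_w, (CSeries_incr_1 _ Hsum); simpl; ring.
Qed.

End PowerSeriesOneSub.

Lemma Re_CSeries_RtoC_mul (x : nat -> R) (v : nat -> C) :
  Re (CSeries (fun n => RtoC (x n) * v n)%C) = Series (fun n => x n * Re (v n)).
Proof. apply Series_ext; intros n; apply re_scal_l. Qed.

Section MonotoneCoefficients.
Variable B : nat -> R.
Hypothesis HB0 : B 0%nat = 1.
Hypothesis HBpos : forall n, 0 < B n.
Hypothesis HBdec : forall n, B (S n) <= B n.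

Lemma nonincreasing_le_1 n : B n <= 1.
Proof. induction n as [|n IH]; [lra | pose proof (HBdec n); lra]. Qed.

Lemma nonincreasing_abs_le_1 n : Rabs (B n) <= 1.
Proof. rewrite Rabs_pos_eq; [apply nonincreasing_le_1 | apply Rlt_le, HBpos]. Qed.

Lemma nonincreasing_abs_diff_le_1 n : Rabs (B (S n) - B n) <= 1.
Proof.
  pose proof (HBdec n); pose proof (HBpos (S n)); pose proof (nonincreasing_le_1 n).
  rewrite Rabs_left1; lra.
Qed.

Lemma real_power_series_ge_1 rho : 0 <= rho < 1 -> 1 <= Series (fun n => B n * rho ^ n).
Proof.
  intros Hrho.
  assert (Hgeom : ex_series (fun n => rho ^ n))
    by (apply ex_series_geom; rewrite Rabs_pos_eq; lra).
  assert (Hbound : forall n, Rabs (B n * rho ^ n) <= rho ^ n).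
  { intros n; rewrite Rabs_mult, (Rabs_pos_eq (rho ^ n)) by (apply pow_le; lra).
    pose proof (nonincreasing_abs_le_1 n); pose proof (pow_le rho n (proj1 Hrho)); nra. }
  pose proof (ex_series_Rabs_le _ _ Hbound Hgeom) as Hex.
  rewrite Series_incr_1, HB0, pow_O, Rmult_1_l by exact Hex.
  assert (0 <= Series (fun k => B (S k) * rho ^ S k)); [|lra].
  rewrite <- Series_zero; apply Series_le.
  - intros n; split; [lra|].
    apply Rmult_le_pos; [apply Rlt_le, HBpos | apply pow_le; lra].
  - exact (proj1 (ex_series_incr_1 _) Hex).
Qed.

(* Both sides expand as [1 + sum (B (n+1) - B n) Re (w^(n+1))], and each term
   is smallest when [w] is replaced by [|w|]. *)
Lemma Re_power_series_mul_one_sub_ge w : Cmod w < 1 ->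
  Series (fun n => B n * Cmod w ^ n) * (1 - Cmod w)
    <= Re (CSeries (fun n => RtoC (B n) * w ^ n) * (1 - w))%C.
Proof.
  intros Hw; set (rho := Cmod w).
  assert (Hrho : 0 <= rho) by apply Cmod_ge_0.
  assert (Hrho_disk : Cmod (RtoC rho) < 1) by (rewrite Cmod_R, Rabs_pos_eq; auto).
  pose proof (power_series_mul_one_sub B nonincreasing_abs_le_1 _ Hrho_disk) as Hreal.
  apply (f_equal Re) in Hreal.
  rewrite <- RtoC_minus, re_scal_r, re_plus, re_RtoC, !Re_CSeries_RtoC_mul in Hreal.
  assert (HRe_pow : forall n, Re (RtoC rho ^ n) = rho ^ n)
    by (intros n; now rewrite <- RtoC_pow, re_RtoC).
  rewrite (Series_ext (fun n => B n * Re (RtoC rho ^ n)) (fun n => B n * rho ^ n)),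
          (Series_ext (fun n => (B (S n) - B n) * Re (RtoC rho ^ S n))
                      (fun n => (B (S n) - B n) * rho ^ S n)) in Hreal
    by (intros n; now rewrite HRe_pow).
  rewrite Hreal, power_series_mul_one_sub, re_plus, re_RtoC, Re_CSeries_RtoC_mul
    by auto using nonincreasing_abs_le_1.
  apply Rplus_le_compat_l, Series_le_ex.
  - apply (ex_series_Rabs_le _ (fun n => rho ^ S n)).
    + intros n; rewrite Rabs_mult, (Rabs_pos_eq (rho ^ S n)) by (apply pow_le; auto).
      pose proof (nonincreasing_abs_diff_le_1 n); pose proof (pow_le rho (S n) Hrho); nra.
    + apply ex_series_Rscal_l, ex_series_geom; rewrite Rabs_pos_eq; auto.
  - eapply ex_series_ext; [|exact (abs_summable_Re _
      (abs_summable_power_series_S _ nonincreasing_abs_diff_le_1 w Hw))].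
    intros n; apply re_scal_l.
  - intros n; pose proof (HBdec n).
    assert (Re (w ^ S n) <= rho ^ S n).
    { unfold rho; rewrite <- Cmod_pow.
      exact (Rle_trans _ _ _ (Rle_abs _) (re_le_Cmod _)). }
    nra.
Qed.

Lemma Re_power_series_mul_one_sub_pos w : Cmod w < 1 ->
  0 < Re (CSeries (fun n => RtoC (B n) * w ^ n) * (1 - w))%C.
Proof.
  intros Hw; pose proof (Cmod_ge_0 w).
  pose proof (real_power_series_ge_1 (Cmod w) (conj (Cmod_ge_0 w) Hw)).
  pose proof (Re_power_series_mul_one_sub_ge w Hw); nra.
Qed.

End MonotoneCoefficients.

Lemma norm_C_R (x : C_R_NormedModule) : norm x = Cmod x.
Proof.
  destruct x as [x y]; unfold norm; simpl; unfold prod_norm, Cmod; simpl.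
  unfold norm; simpl; change (abs x) with (Rabs x); change (abs y) with (Rabs y).
  rewrite !Rmult_1_r, <- !Rabs_mult, !(Rabs_pos_eq (_ * _)) by nra; reflexivity.
Qed.

Lemma filterdiff_C_R_of_is_derive (Phi : C -> C) p L : is_derive Phi p L ->
  filterdiff (K := R_AbsRing) (U := C_R_NormedModule) (V := C_R_NormedModule)
    Phi (locally (p : C_R_NormedModule)) (fun u => (u * L)%C).
Proof.
  intros [_ HD]; split.
  - split.
    + intros x y; change ((x + y) * L = x * L + y * L)%C; ring.
    + intros k [x1 x2]; destruct L as [l1 l2].
      cbv [scal Cmult]; simpl; unfold prod_scal, scal; simpl; unfold mult; simpl.
      f_equal; ring.
    + exists (Cmod L + 1); split; [pose proof (Cmod_ge_0 L); lra|].
      intros x; rewrite !norm_C_R, Cmod_mult.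
      pose proof (Cmod_ge_0 x); pose proof (Cmod_ge_0 L); nra.
  - intros x Hx.
    pose proof (is_filter_lim_locally_unique (K := R_AbsRing) (V := C_R_NormedModule) p x Hx);
      subst x.
    intros eps; specialize (HD p (fun P HP => HP) eps).
    apply locally_C; eapply filter_imp; [|exact HD].
    intros y Hy; simpl in Hy; rewrite !norm_C_R; exact Hy.
Qed.

Lemma is_derive_curve_comp (E : R -> C) (Phi : C -> C) t E' L :
  is_derive (K := R_AbsRing) (V := C_R_NormedModule) E t E' -> is_derive Phi (E t) L ->
  is_derive (K := R_AbsRing) (V := C_R_NormedModule) (fun s => Phi (E s)) t (E' * L)%C.
Proof.
  intros HE HPhi; eapply filterdiff_ext_lin.
  - exact (filterdiff_comp' E Phi _ _ _ HE (filterdiff_C_R_of_is_derive _ _ _ HPhi)).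
  - intros y; destruct E' as [e1 e2], L as [l1 l2].
    cbv [scal Cmult]; simpl; unfold prod_scal, scal; simpl; unfold mult; simpl.
    f_equal; ring.
Qed.

Lemma is_derive_curve_Re (phi : R -> C) t l :
  is_derive (K := R_AbsRing) (V := C_R_NormedModule) phi t l ->
  is_derive (fun s => Re (phi s)) t (Re l).
Proof.
  intros H; eapply filterdiff_ext_lin.
  - apply (filterdiff_comp' phi (fun p : C_R_NormedModule => fst p)); [exact H|].
    apply filterdiff_linear, is_linear_fst.
  - intros y; now destruct l.
Qed.

Lemma is_derive_curve_pair (f g : R -> R) t df dg :
  is_derive f t df -> is_derive g t dg ->
  is_derive (K := R_AbsRing) (V := C_R_NormedModule)
    (fun s => (f s, g s) : C) t ((df, dg) : C).
Proof.
  intros Hf Hg; eapply filterdiff_ext_lin.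
  - apply (filterdiff_comp_2 (W := C_R_NormedModule) f g (fun x y => (x, y)));
      [exact Hf | exact Hg |].
    apply (filterdiff_linear
      (fun p : prod_NormedModule R_AbsRing R_NormedModule R_NormedModule => (fst p, snd p))).
    apply is_linear_prod; [apply is_linear_fst | apply is_linear_snd].
  - reflexivity.
Qed.

Lemma is_derive_Cmult_r (k x : C) : is_derive (fun u => u * k)%C x k.
Proof.
  apply is_derive_C_of_estimate; intros eps Heps; exists 1; split; [lra|].
  intros y _; replace (y * k - x * k - (y - x) * k)%C with (RtoC 0) by ring.
  rewrite Cmod_0; pose proof (Cmod_ge_0 (y - x)); nra.
Qed.

(* [is_derive_comp] needs the inner derivative for the normed-module structure
   that [C] carries as an [AbsRing], which is not convertible to [C_NormedModule]. *)
Lemma is_derive_AbsRing_of_C (F : C -> C) x L :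
  is_derive F x L -> is_derive (V := AbsRing_NormedModule C_AbsRing) F x L.
Proof. intros [_ HD]; split; [apply is_linear_scal_l | exact HD]. Qed.

Definition cayley (z : C) : C := ((1 + z) / (1 - z))%C.
Definition cayley_inv (E : C) : C := ((E - 1) / (E + 1))%C.

Lemma one_sub_neq_0 (z : C) : Cmod z < 1 -> (1 - z <> 0)%C.
Proof.
  intros Hz Hz1; replace z with (RtoC 1) in Hz
    by (replace z with (1 - (1 - z))%C by ring; rewrite Hz1; ring).
  rewrite Cmod_1 in Hz; lra.
Qed.

Lemma cayley_invK (z : C) : Cmod z < 1 -> cayley_inv (cayley z) = z.
Proof.
  intros Hz; unfold cayley_inv, cayley; field; split; [now apply one_sub_neq_0|].
  intro H2; assert (H20 : RtoC 2 = RtoC 0) by (rewrite <- H2; ring).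
  apply RtoC_inj in H20; lra.
Qed.

Lemma Re_cayley_pos (z : C) : Cmod z < 1 -> 0 < Re (cayley z).
Proof.
  destruct z as [x y]; intros Hz.
  assert (Hxy : x * x + y * y < 1).
  { pose proof (Cmod2_alt (x, y)); pose proof (Cmod_ge_0 (x, y)); simpl in *; nra. }
  assert (Hden : 0 < (1 - x) * (1 - x) + y * y) by nra.
  replace (Re (cayley (x, y))) with ((1 - x * x - y * y) / ((1 - x) * (1 - x) + y * y)).
  - apply Rdiv_lt_0_compat; lra.
  - unfold cayley, Cdiv, Cinv, Cmult, Cplus, Cminus, Copp, Re, RtoC; simpl; field; lra.
Qed.

Lemma cayley_inv_disk (E : C) : 0 < Re E -> Cmod (cayley_inv E) < 1 /\ (E + 1 <> 0)%C.
Proof.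
  destruct E as [x y]; simpl; intros Hx.
  assert (Hn : ((x, y) + 1 <> 0)%C) by (intro H; injection H; lra).
  split; [|exact Hn].
  unfold cayley_inv; rewrite Cmod_div by exact Hn.
  apply Rlt_div_l; [now apply Cmod_gt_0|]; rewrite Rmult_1_l.
  unfold Cmod, Cplus, Cminus, Copp, RtoC; simpl.
  apply sqrt_lt_1_alt; rewrite !Rmult_1_r; split; [|nra].
  apply Rplus_le_le_0_compat; apply Rle_0_sqr.
Qed.

Lemma is_derive_cayley_inv x : (x + 1 <> 0)%C ->
  is_derive cayley_inv x (2 / ((x + 1) * (x + 1)))%C.
Proof.
  intros Hx; apply is_derive_C_of_estimate; intros eps Heps.
  set (m := Cmod (x + 1)).
  assert (Hm : 0 < m) by now apply Cmod_gt_0.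
  exists (Rmin (m / 2) (eps * (m * m * m) / 4)); split.
  { apply Rmin_pos; [lra|]. apply Rdiv_lt_0_compat; [|lra].
    repeat apply Rmult_lt_0_compat; auto. }
  intros y Hy; set (h := (y - x)%C) in *.
  assert (Hh1 : Cmod h < m / 2) by exact (Rlt_le_trans _ _ _ Hy (Rmin_l _ _)).
  assert (Hh2 : Cmod h < eps * (m * m * m) / 4) by exact (Rlt_le_trans _ _ _ Hy (Rmin_r _ _)).
  assert (Hy1 : m / 2 <= Cmod (y + 1)).
  { pose proof (Cmod_triangle (y + 1) (- h)) as Htri.
    replace ((y + 1) + - h)%C with (x + 1)%C in Htri by (unfold h; ring).
    rewrite Cmod_opp in Htri; fold m in Htri; lra. }
  assert (Hy0 : (y + 1 <> 0)%C) by (intro H; rewrite H, Cmod_0 in Hy1; lra).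
  replace (cayley_inv y - cayley_inv x - h * (2 / ((x + 1) * (x + 1))))%C
    with (- (2 * (h * h) / ((y + 1) * ((x + 1) * (x + 1)))))%C
    by (unfold cayley_inv, h; field; split; auto).
  rewrite Cmod_opp, Cmod_div, !Cmod_mult.
  2:{ now repeat apply Cmult_neq_0. }
  replace (Cmod 2) with 2 by (rewrite Cmod_R, Rabs_pos_eq; lra).
  fold m; pose proof (Cmod_ge_0 h).
  apply Rle_div_l; [apply Rmult_lt_0_compat; nra|].
  assert (Cmod h * 4 <= eps * (m * m * m)) by (apply Rlt_le, Rle_div_r in Hh2; lra).
  assert (eps * Cmod h * (m / 2 * (m * m)) <= eps * Cmod h * (Cmod (y + 1) * (m * m))).
  { apply Rmult_le_compat_l; [nra|]. apply Rmult_le_compat_r; nra. }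
  nra.
Qed.

Definition Cexp (zeta : C) : C :=
  (exp (Re zeta) * cos (Im zeta), exp (Re zeta) * sin (Im zeta)).

Lemma Re_Cexp_pos zeta : - PI / 2 < Im zeta < PI / 2 -> 0 < Re (Cexp zeta).
Proof. intros Hth; apply Rmult_lt_0_compat; [apply exp_pos | apply cos_gt_0; lra]. Qed.

Lemma Cexp_polar (z : C) : 0 < Re z -> exists zeta, - PI / 2 < Im zeta < PI / 2 /\ z = Cexp zeta.
Proof.
  destruct z as [x y]; simpl; intros Hx.
  assert (Hm : 0 < Cmod (x, y)) by (apply Cmod_gt_0; intro H; injection H; lra).
  assert (Hm2 : Cmod (x, y) * Cmod (x, y) = x * x + y * y)
    by (pose proof (Cmod2_alt (x, y)); simpl in *; nra).
  exists (ln (Cmod (x, y)), atan (y / x)); split; [apply atan_bound|].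
  unfold Cexp; simpl; rewrite exp_ln, cos_atan, sin_atan by exact Hm.
  replace (sqrt (1 + (y / x)²)) with (Cmod (x, y) / x).
  - f_equal; field; lra.
  - rewrite <- (sqrt_Rsqr (Cmod (x, y) / x)) by (apply Rlt_le, Rdiv_lt_0_compat; auto).
    f_equal; unfold Rsqr, Rdiv.
    replace (Cmod (x, y) * / x * (Cmod (x, y) * / x)) with (Cmod (x, y) * Cmod (x, y) / (x * x))
      by (field; lra).
    rewrite Hm2; field; lra.
Qed.

Definition log_segment (zeta0 zeta1 : C) (t : R) : C := Cexp (zeta0 + t * (zeta1 - zeta0))%C.

Lemma log_segment_components s0 th0 s1 th1 t :
  log_segment (s0, th0) (s1, th1) t =
  (exp (s0 + t * (s1 - s0)) * cos (th0 + t * (th1 - th0)),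
   exp (s0 + t * (s1 - s0)) * sin (th0 + t * (th1 - th0))).
Proof.
  unfold log_segment, Cexp; simpl.
  replace (t * (s1 + - s0) - 0 * (th1 + - th0)) with (t * (s1 - s0)) by ring.
  replace (t * (th1 + - th0) + 0 * (s1 + - s0)) with (t * (th1 - th0)) by ring.
  reflexivity.
Qed.

Lemma is_derive_log_segment zeta0 zeta1 t :
  is_derive (K := R_AbsRing) (V := C_R_NormedModule) (log_segment zeta0 zeta1) t
    ((zeta1 - zeta0) * log_segment zeta0 zeta1 t)%C.
Proof.
  destruct zeta0 as [s0 th0], zeta1 as [s1 th1].
  eapply is_derive_ext; [intros r; symmetry; apply log_segment_components|].
  rewrite log_segment_components.
  set (s := s0 + t * (s1 - s0)); set (th := th0 + t * (th1 - th0)).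
  replace (Cmult ((s1, th1) - (s0, th0))%C (exp s * cos th, exp s * sin th)) with
    (((s1 - s0) * exp s * cos th - (th1 - th0) * exp s * sin th,
      (s1 - s0) * exp s * sin th + (th1 - th0) * exp s * cos th) : C)
    by (unfold Cmult; simpl; f_equal; ring).
  apply is_derive_curve_pair; auto_derive; auto; unfold s, th; ring.
Qed.

Lemma Re_log_segment_pos zeta0 zeta1 t :
  - PI / 2 < Im zeta0 < PI / 2 -> - PI / 2 < Im zeta1 < PI / 2 -> 0 <= t <= 1 ->
  0 < Re (log_segment zeta0 zeta1 t).
Proof.
  destruct zeta0 as [s0 th0], zeta1 as [s1 th1]; intros Ht0 Ht1 Ht; simpl in Ht0, Ht1.
  rewrite log_segment_components; apply (Re_Cexp_pos (_, _)); simpl.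
  destruct (Rle_dec th0 th1).
  - assert (0 <= t * (th1 - th0)) by (apply Rmult_le_pos; lra).
    assert (t * (th1 - th0) <= th1 - th0) by nra.
    lra.
  - assert (0 <= t * (th0 - th1)) by (apply Rmult_le_pos; lra).
    assert (t * (th0 - th1) <= th0 - th1) by nra.
    lra.
Qed.

Section Injectivity.
Variables f fd : C -> C.
Hypothesis Hf : forall u, Cmod u < 1 -> is_derive f u (fd u).
Hypothesis Hpos : forall u, Cmod u < 1 -> 0 < Re (fd u * (1 - u * u))%C.

(* The curve [cayley_inv (log_segment ...)] is a straight segment in the
   coordinate [log (cayley u) = 2 artanh u], so along it [du/dt] is the
   constant multiple [(zeta1 - zeta0) / 2] of [1 - u^2]. *)
Lemma is_derive_Re_along_log_segment zeta0 zeta1 t :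
  zeta1 <> zeta0 -> 0 < Re (log_segment zeta0 zeta1 t) ->
  let u := cayley_inv (log_segment zeta0 zeta1 t) in
  is_derive (fun s => Re (f (cayley_inv (log_segment zeta0 zeta1 s)) / (zeta1 - zeta0))%C) t
    (Re (fd u * (1 - u * u)) / 2).
Proof.
  intros Hzeta HE u; set (E := log_segment zeta0 zeta1 t) in *.
  assert (HK : (zeta1 - zeta0 <> 0)%C)
    by (intro H0; apply Hzeta; rewrite <- (Cplus_0_l zeta0), <- H0; ring).
  destruct (cayley_inv_disk E HE) as [Hu HE1].
  pose proof (is_derive_comp f cayley_inv E _ _ (Hf _ Hu)
                (is_derive_AbsRing_of_C _ _ _ (is_derive_cayley_inv E HE1))) as Hfc.
  pose proof (is_derive_curve_comp _ _ t _ _ (is_derive_log_segment zeta0 zeta1 t) Hfc) as Hcurve.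
  pose proof (is_derive_curve_comp _ _ t _ _ Hcurve (is_derive_Cmult_r (/ (zeta1 - zeta0)) _))
    as Hdiv.
  replace (Re (fd u * (1 - u * u)) / 2) with
    (Re ((zeta1 - zeta0) * E * (2 / ((E + 1) * (E + 1)) * fd (cayley_inv E))
         * / (zeta1 - zeta0))%C).
  - exact (is_derive_curve_Re _ t _ Hdiv).
  - replace ((zeta1 - zeta0) * E * (2 / ((E + 1) * (E + 1)) * fd (cayley_inv E))
             * / (zeta1 - zeta0))%C
      with (RtoC (1 / 2) * (fd u * (1 - u * u)))%C.
    + rewrite re_scal_l; field.
    + unfold u, cayley_inv; rewrite RtoC_div by lra.
      field; repeat split; auto; intro H; apply RtoC_inj in H; lra.
Qed.

(* If [f z = f w], the real part of [f / (zeta1 - zeta0)] along the curve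
   joining [w] to [z] has positive derivative yet equal end values. *)
Lemma disk_injective_of_Re_deriv_pos z w :
  Cmod z < 1 -> Cmod w < 1 -> f z = f w -> z = w.
Proof.
  intros Hz Hw Hfzw; destruct (Ceq_dec z w) as [|Hzw]; [assumption|exfalso].
  destruct (Cexp_polar _ (Re_cayley_pos z Hz)) as [zeta1 [Him1 Hz1]].
  destruct (Cexp_polar _ (Re_cayley_pos w Hw)) as [zeta0 [Him0 Hw0]].
  assert (Hzeta : zeta1 <> zeta0).
  { intro H; apply Hzw; now rewrite <- (cayley_invK z Hz), <- (cayley_invK w Hw), Hz1, Hw0, H. }
  set (u := fun t => cayley_inv (log_segment zeta0 zeta1 t)).
  set (psi := fun t => Re (f (u t) / (zeta1 - zeta0))%C).
  assert (Hpsi : forall t, 0 <= t <= 1 ->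
    is_derive psi t (Re (fd (u t) * (1 - u t * u t)) / 2)
    /\ 0 < Re (fd (u t) * (1 - u t * u t)) / 2).
  { intros t Ht; pose proof (Re_log_segment_pos zeta0 zeta1 t Him0 Him1 Ht) as HE.
    split; [exact (is_derive_Re_along_log_segment zeta0 zeta1 t Hzeta HE)|].
    pose proof (Hpos (u t) (proj1 (cayley_inv_disk _ HE))); lra. }
  destruct (MVT_cor2 psi (fun t => Re (fd (u t) * (1 - u t * u t)) / 2) 0 1 Rlt_0_1)
    as [c [Hmvt Hc]].
  { intros t Ht; apply is_derive_Reals, (Hpsi t Ht). }
  assert (Hends : psi 1 = psi 0).
  { unfold psi, u, log_segment.
    replace (zeta0 + RtoC 1 * (zeta1 - zeta0))%C with zeta1 by ring.
    replace (zeta0 + RtoC 0 * (zeta1 - zeta0))%C with zeta0 by ring.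
    now rewrite <- Hz1, <- Hw0, !cayley_invK, Hfzw. }
  pose proof (proj2 (Hpsi c (conj (Rlt_le _ _ (proj1 Hc)) (Rlt_le _ _ (proj2 Hc))))).
  rewrite Hends in Hmvt; lra.
Qed.

End Injectivity.

Lemma Cpow_odd (z : C) n : (z ^ (2 * n + 1))%C = (z * (z * z) ^ n)%C.
Proof.
  rewrite Cpow_add_r, Cpow_mult_r, Cpow_1_r.
  replace (z ^ 2)%C with (z * z)%C by (simpl; ring); ring.
Qed.

Lemma Cpow_even (z : C) n : (z ^ (2 * n))%C = ((z * z) ^ n)%C.
Proof. rewrite Cpow_mult_r; f_equal; simpl; ring. Qed.

Lemma Cmod_sqr_lt_1 (z : C) : Cmod z < 1 -> Cmod (z * z) < 1.
Proof. intros Hz; rewrite Cmod_mult; pose proof (Cmod_ge_0 z); nra. Qed.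

Lemma odd_series_deriv_sqr a z :
  odd_series_deriv a z = CSeries (fun n => RtoC (a n * INR (2 * n + 1)) * (z * z) ^ n)%C.
Proof. apply CSeries_ext; intros n; now rewrite Cpow_even. Qed.

Lemma power_series_at_0 (B : nat -> R) : (forall n, Rabs (B n) <= 1) ->
  CSeries (fun n => RtoC (B n) * RtoC 0 ^ n)%C = RtoC (B 0%nat).
Proof.
  intros HB.
  rewrite CSeries_incr_1 by (apply abs_summable_power_series; [exact HB | rewrite Cmod_0; lra]).
  rewrite (CSeries_ext _ (fun _ => RtoC 0)), CSeries_zero by (intros; simpl; ring).
  simpl; ring.
Qed.

Lemma geometric_series_mul_one_sub w : Cmod w < 1 ->
  (CSeries (fun n => RtoC 1 * w ^ n) * (1 - w))%C = RtoC 1.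
Proof.
  intros Hw; rewrite (power_series_mul_one_sub (fun _ => 1))
    by (auto; intros; rewrite Rabs_R1; lra).
  rewrite (CSeries_ext _ (fun _ => RtoC 0)), CSeries_zero by (intros; rewrite Rminus_diag; ring).
  ring.
Qed.

Lemma is_derive_half_log_ratio z : Cmod z < 1 ->
  is_derive half_log_ratio z (CSeries (fun n => RtoC 1 * (z * z) ^ n))%C.
Proof.
  intros Hz.
  assert (Hcoef : forall n, Rabs (/ INR (2 * n + 1)) <= 1).
  { intros n; pose proof (INR_odd_ge_1 n).
    rewrite Rabs_pos_eq by (apply Rlt_le, Rinv_0_lt_compat; lra).
    rewrite <- Rinv_1; apply Rinv_le_contravar; lra. }
  apply (is_derive_ext (odd_series (fun n => / INR (2 * n + 1)))).
  - intros u; apply CSeries_ext; intros n; pose proof (INR_odd_ge_1 n).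
    rewrite RtoC_inv by lra; field; intro H0; apply RtoC_inj in H0; lra.
  - replace (CSeries (fun n => RtoC 1 * (z * z) ^ n))%C
      with (odd_series_deriv (fun n => / INR (2 * n + 1)) z).
    + exact (is_derive_odd_series _ Hcoef z Hz).
    + rewrite odd_series_deriv_sqr; apply CSeries_ext; intros n.
      pose proof (INR_odd_ge_1 n); rewrite Rinv_l by lra; reflexivity.
Qed.

Lemma Rmax3_le_inv x y z w : w >= Rmax x (Rmax y z) -> w >= x /\ w >= y /\ w >= z.
Proof.
  pose proof (Rmax_l x (Rmax y z)); pose proof (Rmax_r x (Rmax y z)).
  pose proof (Rmax_l y z); pose proof (Rmax_r y z); lra.
Qed.

Lemma pos_of_mult_pos_plus_pos x y : 0 < x * y -> 0 < x + y -> 0 < x /\ 0 < y.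
Proof. intros; destruct (Rlt_or_le 0 x), (Rlt_or_le 0 y); split; nra. Qed.

Section F32.
Variables a b c d e : R.
Hypotheses (Ha : 0 < a) (Hb : 0 < b) (Hc : 0 < c) (Hd : 0 < d) (He : 0 < e).
Hypothesis H1 : d * e >= 3 * a * b * c.
Hypothesis H2 : d + e >= a + b + c.
Hypothesis H3 : d + e >= alpha_abc a b c.
Hypothesis H4 : d + e >= 3 * (a * b + b * c + a * c) - 7 * a * b * c.

Let f := fun z => (z * F32 a b c d e (z * z))%C.
Let fd := fun z => CSeries (fun n => RtoC (deriv_coef a b c d e n) * (z * z) ^ n)%C.
Let A := F32_coef a b c d e.
Let HA := F32_coef_abs_le_1 a b c d e Ha Hb Hc Hd He H1 H2 H3 H4.
Let HB0 := deriv_coef_0 a b c d e.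
Let HBpos := deriv_coef_pos a b c d e Ha Hb Hc Hd He.
Let HBdec := deriv_coef_S_le a b c d e Ha Hb Hc Hd He H1 H2 H3 H4.

Lemma F32_odd_series z : Cmod z < 1 -> f z = odd_series A z.
Proof.
  intros Hz; unfold f, F32, odd_series.
  rewrite <- CSeries_scal by exact (abs_summable_power_series A HA _ (Cmod_sqr_lt_1 z Hz)).
  apply CSeries_ext; intros n; rewrite Cpow_odd; unfold A, F32_coef; ring.
Qed.

Lemma is_derive_F32_odd z : Cmod z < 1 -> is_derive f z (fd z).
Proof.
  intros Hz; apply (is_derive_ext_loc (odd_series A)).
  - exists (mkposreal (1 - Cmod z) ltac:(simpl; lra)); intros y Hy.
    change (Cmod (y - z) < 1 - Cmod z) in Hy.
    symmetry; apply F32_odd_series.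
    replace y with (z + (y - z))%C by ring.
    eapply Rle_lt_trans; [apply Cmod_triangle | lra].
  - replace (fd z) with (odd_series_deriv A z).
    + exact (is_derive_odd_series A HA z Hz).
    + rewrite odd_series_deriv_sqr; apply CSeries_ext; intros n.
      unfold deriv_coef, A; now rewrite Rmult_comm.
Qed.

Lemma F32_odd_analytic : analytic_on_disk f.
Proof. intros z Hz; exists (fd z); now apply is_derive_F32_odd. Qed.

Lemma Re_F32_deriv_mul_one_sub_sqr_pos u : Cmod u < 1 -> 0 < Re (fd u * (1 - u * u))%C.
Proof. intros Hu; apply Re_power_series_mul_one_sub_pos; auto using Cmod_sqr_lt_1. Qed.

Lemma F32_odd_normalized : normalized f.
Proof.
  split; [exact F32_odd_analytic | split; [unfold f; ring|]].
  replace (RtoC 1) with (fd 0%C).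
  - apply is_derive_F32_odd; rewrite Cmod_0; lra.
  - unfold fd; rewrite Cmult_0_l, power_series_at_0, HB0; [reflexivity|].
    now apply nonincreasing_abs_le_1.
Qed.

Lemma F32_odd_univalent : univalent_on_disk f.
Proof.
  split; [exact F32_odd_analytic|].
  exact (disk_injective_of_Re_deriv_pos f fd is_derive_F32_odd
           Re_F32_deriv_mul_one_sub_sqr_pos).
Qed.

Lemma Re_F32_odd_deriv_div_pos z f' g' : Cmod z < 1 ->
  is_derive f z f' -> is_derive half_log_ratio z g' -> 0 < Re (f' / g')%C.
Proof.
  intros Hz Hf' Hg'.
  set (gd := CSeries (fun n => RtoC 1 * (z * z) ^ n)%C).
  replace f' with (fd z)
    by (rewrite <- (is_C_derive_unique _ _ _ Hf');
        symmetry; apply is_C_derive_unique, is_derive_F32_odd, Hz).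
  replace g' with gd
    by (rewrite <- (is_C_derive_unique _ _ _ Hg');
        symmetry; apply is_C_derive_unique, is_derive_half_log_ratio, Hz).
  assert (Hgd : (gd * (1 - z * z))%C = RtoC 1)
    by exact (geometric_series_mul_one_sub _ (Cmod_sqr_lt_1 z Hz)).
  assert (Hgd0 : gd <> 0%C)
    by (intro Hzero; rewrite Hzero, Cmult_0_l in Hgd; apply RtoC_inj in Hgd; lra).
  replace (fd z / gd)%C with (fd z / gd * (gd * (1 - z * z)))%C by (rewrite Hgd; ring).
  replace (fd z / gd * (gd * (1 - z * z)))%C with (fd z * (1 - z * z))%C
    by (field; exact Hgd0).
  now apply Re_F32_deriv_mul_one_sub_sqr_pos.
Qed.

End F32.

Theorem theorem2p2 (a b c d e : R) :
  0 < a -> 0 < b -> 0 < c ->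
  not_nonpos_int d -> not_nonpos_int e ->
  d * e >= 3 * a * b * c ->
  d + e >= Rmax (a + b + c)
             (Rmax (alpha_abc a b c)
                   (3 * (a * b + b * c + a * c) - 7 * a * b * c)) ->
  close_to_convex_wrt (fun z => (z * F32 a b c d e (z * z))%C) half_log_ratio.
Proof.
  (* [not_nonpos_int d] and [not_nonpos_int e] are implied: [d e > 0] and
     [d + e > 0] force [d, e > 0]. *)
  intros Ha Hb Hc _ _ H1 Hmax.
  destruct (Rmax3_le_inv _ _ _ _ Hmax) as [H2 [H3 H4]].
  assert (Habc : 0 < a * b * c) by (repeat apply Rmult_lt_0_compat; assumption).
  destruct (pos_of_mult_pos_plus_pos d e) as [Hd He]; [lra | lra |].
  split; [|split; [|split]].
  - exact (F32_odd_normalized a b c d e Ha Hb Hc Hd He H1 H2 H3 H4).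
  - exact (F32_odd_univalent a b c d e Ha Hb Hc Hd He H1 H2 H3 H4).
  - intros z Hz; eexists; now apply is_derive_half_log_ratio.
  - exact (Re_F32_odd_deriv_div_pos a b c d e Ha Hb Hc Hd He H1 H2 H3 H4).
Qed.
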